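(* Let $R$ be a commutative ring with $\mathbb{Q}\subseteq R$. Let $\mathcal{E}$ (resp. $\mathcal{F}$) be a finitely generated projective module over a commutative unital $R$-algebra $\mathcal{A}$ (resp. $\mathcal{B}$), with a symmetric, strongly nondegenerate, full inner product $\langle\cdot,\cdot\rangle_{\mathcal{E}}$ (resp. $\langle\cdot,\cdot\rangle_{\mathcal{F}}$). Let $m\in\mathcal{C}^3(\mathcal{E})$ be a Courant algebroid structure on $\mathcal{E}$. Let $\Phi:\mathcal{C}^\bullet(\mathcal{E})\to\mathcal{C}^\bullet(\mathcal{F})$ be a morphism of graded Poisson algebras, i.e. a homogeneous $R$-linear map of degree $0$ compatible with the products $\wedge$ and the brackets $[\cdot,\cdot]$, and write $\Phi_k=\Phi|_{\mathcal{C}^k(\mathcal{E})}$. Then: (i) $m'=\Phi(m)$ is a Courant algebroid structure on $\mathcal{F}$; (ii) $(\Phi_0,\Phi_1)$ is a morphism of Courant algebroids from $(\mathcal{E},m)$ to $(\mathcal{F},m')$; (iii) $\Phi$ induces a morphism $H^\bullet(\mathcal{C}(\mathcal{E}),\delta_m)\to H^\bullet(\mathcal{C}(\mathcal{F}),\delta_{m'})$ of cohomologies.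
   Context: Strongly nondegenerate: $\mathcal{E}\to\operatorname{Hom}_{\mathcal{A}}(\mathcal{E},\mathcal{A})$ is an isomorphism. Full: every element of the algebra is a finite sum $\sum_i\langle x_i,y_i\rangle$. $\operatorname{Der}(\mathcal{A})$: $R$-linear derivations. $\mathcal{C}^0(\mathcal{E})=\mathcal{A}$ and $\mathcal{C}^1(\mathcal{E})=\mathcal{E}$. For $r\ge2$, $\mathcal{C}^r(\mathcal{E})$ is the set of $\mathsf{C}\in\operatorname{Hom}_R(\mathcal{E}^{\otimes_R(r-1)},\mathcal{E})$ admitting an $R$-multilinear symbol $\sigma_{\mathsf{C}}:\mathcal{E}^{\otimes(r-2)}\to\operatorname{Der}(\mathcal{A})$ with two properties: (1) $\sigma_{\mathsf{C}}(x_1,\dots,x_{r-2})\langle u,w\rangle=\langle\mathsf{C}(x_1,\dots,x_{r-2},u),w\rangle+\langle u,\mathsf{C}(x_1,\dots,x_{r-2},w)\rangle$; (2) for $r\ge3$ and $1\le i\le r-2$, $\langle\mathsf{C}(\dots,x_i,x_{i+1},\dots)+\mathsf{C}(\dots,x_{i+1},x_i,\dots),u\rangle=\sigma_{\mathsf{C}}(x_1,\dots,\widehat{x_i},\widehat{x_{i+1}},\dots,x_{r-1},u)\langle x_i,x_{i+1}\rangle$. The same definitions apply to $\mathcal{F}$ over $\mathcal{B}$. $i_x\mathsf{C}$ inserts $x$ in the first argument. $[\cdot,\cdot]$ is the unique $R$-bilinear graded skew-symmetric map $\mathcal{C}^r\times\mathcal{C}^s\to\mathcal{C}^{r+s-2}$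 with: - $[a,b]=0$ and $[a,x]=0=[x,a]$; - $[x,y]=\langle x,y\rangle$; - $[\mathsf{D},a]=\sigma_{\mathsf{D}}(a)=-[a,\mathsf{D}]$ for $\mathsf{D}\in\mathcal{C}^2$; - $[\mathsf{C},x]=i_x\mathsf{C}=(-1)^{r+1}[x,\mathsf{C}]$ for $r\ge2$; - $[[\mathsf{C}_1,\mathsf{C}_2],x]=(-1)^s[[\mathsf{C}_1,x],\mathsf{C}_2]+[\mathsf{C}_1,[\mathsf{C}_2,x]]$. $\wedge$ is the unique degree-$0$ product with $a\wedge b=ab$, $a\wedge x=ax=x\wedge a$, and $[\mathsf{C}_1\wedge\mathsf{C}_2,x]=(-1)^s[\mathsf{C}_1,x]\wedge\mathsf{C}_2+\mathsf{C}_1\wedge[\mathsf{C}_2,x]$. These make $\mathcal{C}^\bullet$ a graded Poisson algebra of degree $-2$. A Courant algebroid structure on $\mathcal{E}$ is an element $m\in\mathcal{C}^3(\mathcal{E})$, i.e. a bracket $m:\mathcal{E}\otimes_R\mathcal{E}\to\mathcal{E}$ with anchor $\sigma_m:\mathcal{E}\to\operatorname{Der}(\mathcal{A})$, satisfying the Jacobi identity $m(x,m(y,z))=m(m(x,y),z)+m(y,m(x,z))$. Equivalently, $m\in\mathcal{C}^3(\mathcal{E})$ with $[m,m]=0$. Then $\delta_m=[m,\cdot]$ satisfies $\delta_m^2=0$, and $H^\bullet(\mathcal{C}(\mathcal{E}),\delta_m)$ denotes the cohomology of $(\mathcal{C}^\bullet(\mathcal{E}),\delta_m)$. A morphism of Courant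 algebroids $(\mathcal{E}_1,[\cdot,\cdot]_1,\sigma_1)\to(\mathcal{E}_2,[\cdot,\cdot]_2,\sigma_2)$ over $\mathcal{A}_1,\mathcal{A}_2$ is a pair of $R$-linear maps $(\phi:\mathcal{A}_1\to\mathcal{A}_2,\ \psi:\mathcal{E}_1\to\mathcal{E}_2)$ satisfying, for all $a,b\in\mathcal{A}_1$ and $x,y\in\mathcal{E}_1$: - $\phi(ab)=\phi(a)\phi(b)$; - $\psi(ax)=\phi(a)\psi(x)$; - $\psi([x,y]_1)=[\psi(x),\psi(y)]_2$; - $\phi(\sigma_1(x)a)=\sigma_2(\psi(x))\phi(a)$; - $\phi(\langle x,y\rangle_1)=\langle\psi(x),\psi(y)\rangle_2$. *)

From mathcomp Require Import all_boot all_algebra.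
Set Implicit Arguments. Unset Strict Implicit. Unset Printing Implicit Defensive.
Import GRing.Theory.
Local Open Scope ring_scope.

Section Cochains.
Variables (R : comNzRingType) (A : comAlgType R) (E : lmodType A).

Definition scE (r : R) (x : E) : E := r%:A *: x.

(* finitely generated projective A-module: a retract of some A^n *)
Definition fg_projective : Prop :=
  exists (n : nat) (f : E -> 'rV[A]_n) (g : 'rV[A]_n -> E),
    [/\ (forall (a : A) x y, f (a *: x + y) = a *: f x + f y),
        (forall (a : A) u v, g (a *: u + v) = a *: g u + g v) &
        cancel f g].

Definition good_inner_product (ip : E -> E -> A) : Prop :=
  [/\ (forall (a : A) x y z, ip (a *: x + y) z = a * ip x z + ip y z),
      (forall x y, ip x y = ip y x),
      (* strong nondegeneracy: x |-> <x, .> is a bijection E -> Hom_A(E, A) *)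
      (forall x x', (forall y, ip x y = ip x' y) -> x = x'),
      (forall phi : E -> A, (forall (a : A) y z, phi (a *: y + z) = a * phi y + phi z) ->
         exists x, forall y, phi y = ip x y) &
      (forall a : A, exists s : seq (E * E), a = \sum_(p <- s) ip p.1 p.2)].

Definition isDer (D : A -> A) : Prop :=
  (forall (r : R) (a b : A), D (r *: a + b) = r *: D a + D b) /\
  (forall a b : A, D (a * b) = D a * b + a * D b).

Definition multilinR (W : zmodType) (scW : R -> W -> W) (n : nat) (f : seq E -> W) : Prop :=
  forall (s1 s2 : seq E) (x y : E) (r : R), (size s1 + size s2).+1 = n ->
    f (s1 ++ (scE r x + y) :: s2) = scW r (f (s1 ++ x :: s2)) + f (s1 ++ y :: s2).

(* A (homogeneous) cochain: the component c0 carries degree 0 (elements of A),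
   c1 degree 1 (elements of E), cf degree r >= 2 (maps E^(r-1) -> E). *)
Record cochain := Cochain { c0 : A; c1 : E; cf : seq E -> E }.

Definition zeroC : cochain := Cochain 0 0 (fun _ => 0).
Definition mk0 (a : A) : cochain := Cochain a 0 (fun _ => 0).
Definition mk1 (x : E) : cochain := Cochain 0 x (fun _ => 0).
Definition addC (u v : cochain) : cochain :=
  Cochain (c0 u + c0 v) (c1 u + c1 v) (fun s => cf u s + cf v s).
Definition scaleC (r : R) (u : cochain) : cochain :=
  Cochain (r *: c0 u) (scE r (c1 u)) (fun s => scE r (cf u s)).

Variable ip : E -> E -> A.

Definition isSymbol (r : nat) (C : seq E -> E) (sigma : seq E -> A -> A) : Prop :=
  [/\ (forall s, size s = (r - 2)%N -> isDer (sigma s)),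
      (forall a : A, multilinR (fun k (b : A) => k *: b) (r - 2) (fun s => sigma s a)),
      (forall s u w, size s = (r - 2)%N ->
         sigma s (ip u w) = ip (C (rcons s u)) w + ip u (C (rcons s w))) &
      (forall s1 s2 x y u, (size s1 + size s2 + 2 = r - 1)%N ->
         ip (C (s1 ++ x :: y :: s2) + C (s1 ++ y :: x :: s2)) u
         = sigma (s1 ++ s2 ++ [:: u]) (ip x y))].

Definition inC (k : nat) (c : cochain) : Prop :=
  match k with
  | 0 => c1 c = 0 /\ forall s, cf c s = 0
  | 1 => c0 c = 0 /\ forall s, cf c s = 0
  | k'.+2 =>
      [/\ c0 c = 0, c1 c = 0,
          (forall s, size s != k'.+1 -> cf c s = 0),
          multilinR scE k'.+1 (cf c) &
          exists sigma, isSymbol k (cf c) sigma]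
  end.

Definition ins (r : nat) (x : E) (C : cochain) : cochain :=
  if r == 2%N then mk1 (cf C [:: x])
  else Cochain 0 0 (fun s => cf C (x :: s)).

Definition sgn (n : nat) : R := (-1) ^+ n.

Definition bilinearOn (op : nat -> nat -> cochain -> cochain -> cochain) : Prop :=
  (forall r s c c' d (k : R), inC r c -> inC r c' -> inC s d ->
     op r s (addC (scaleC k c) c') d = addC (scaleC k (op r s c d)) (op r s c' d)) /\
  (forall r s c d d' (k : R), inC r c -> inC s d -> inC s d' ->
     op r s c (addC (scaleC k d) d') = addC (scaleC k (op r s c d)) (op r s c d')).

(* br satisfies the defining properties of the bracket [.,.] of C^.(E)
   (degree r+s-2 is truncated; the degree -2, -1 cases are forced to be 0) *)
Definition isBracket (br : nat -> nat -> cochain -> cochain -> cochain) : Prop :=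
  [/\ (forall r s c d, inC r c -> inC s d -> inC (r + s - 2) (br r s c d)),
      bilinearOn br &
      (forall r s c d, inC r c -> inC s d ->
         br r s c d = scaleC (- sgn (r * s)) (br s r d c))] /\
  [/\
      (forall a b x, [/\ br 0%N 0%N (mk0 a) (mk0 b) = zeroC,
                         br 0%N 1%N (mk0 a) (mk1 x) = zeroC &
                         br 1%N 0%N (mk1 x) (mk0 a) = zeroC]),
      (forall x y, br 1%N 1%N (mk1 x) (mk1 y) = mk0 (ip x y)),
      (forall D sigma a, inC 2 D -> isSymbol 2 (cf D) sigma ->
         br 2%N 0%N D (mk0 a) = mk0 (sigma [::] a) /\
         br 0%N 2%N (mk0 a) D = mk0 (- sigma [::] a)),
      (forall r C x, (2 <= r)%N -> inC r C ->
         br r 1%N C (mk1 x) = ins r x C /\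
         br 1%N r (mk1 x) C = scaleC (sgn r.+1) (ins r x C)) &
      (forall r s C1 C2 x, inC r C1 -> inC s C2 ->
         br (r + s - 2)%N 1%N (br r s C1 C2) (mk1 x)
         = addC (scaleC (sgn s) (br (r + 1 - 2)%N s (br r 1%N C1 (mk1 x)) C2))
                (br r (s + 1 - 2)%N C1 (br s 1%N C2 (mk1 x))))].

Definition isWedge (br wd : nat -> nat -> cochain -> cochain -> cochain) : Prop :=
  [/\ (forall r s c d, inC r c -> inC s d -> inC (r + s) (wd r s c d)),
      bilinearOn wd,
      (forall a b x, [/\ wd 0%N 0%N (mk0 a) (mk0 b) = mk0 (a * b),
                         wd 0%N 1%N (mk0 a) (mk1 x) = mk1 (a *: x) &
                         wd 1%N 0%N (mk1 x) (mk0 a) = mk1 (a *: x)]) &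
      (forall r s C1 C2 x, inC r C1 -> inC s C2 ->
         br (r + s)%N 1%N (wd r s C1 C2) (mk1 x)
         = addC (scaleC (sgn s) (wd (r + 1 - 2)%N s (br r 1%N C1 (mk1 x)) C2))
                (wd r (s + 1 - 2)%N C1 (br s 1%N C2 (mk1 x))))].

Definition isCourant (m : cochain) : Prop :=
  inC 3 m /\
  forall x y z, cf m [:: x; cf m [:: y; z]]
                = cf m [:: cf m [:: x; y]; z] + cf m [:: y; cf m [:: x; z]].

End Cochains.

Arguments zeroC {R A E}.

Section Morphisms.
Variables (R : comNzRingType) (A B : comAlgType R) (E : lmodType A) (F : lmodType B).
Variables (ipE : E -> E -> A) (ipF : F -> F -> B).

(* morphism of Courant algebroids (E, m) -> (F, m'); the anchors are the
   symbols of m and m' (unique by fullness) *)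
Definition isCourantMorphism (m : cochain E) (m' : cochain F)
  (phi : A -> B) (psi : E -> F) : Prop :=
  [/\ (forall (r : R) a b, phi (r *: a + b) = r *: phi a + phi b),
      (forall (r : R) x y, psi (scE r x + y) = scE r (psi x) + psi y) &
      (forall a b, phi (a * b) = phi a * phi b)] /\
  [/\
      (forall a x, psi (a *: x) = phi a *: psi x),
      (forall x y, psi (cf m [:: x; y]) = cf m' [:: psi x; psi y]),
      (forall sigma sigma', isSymbol ipE 3 (cf m) sigma -> isSymbol ipF 3 (cf m') sigma' ->
         forall x a, phi (sigma [:: x] a) = sigma' [:: psi x] (phi a)) &
      (forall x y, phi (ipE x y) = ipF (psi x) (psi y))].

Definition isGPMorphism (brE wdE : nat -> nat -> cochain E -> cochain E -> cochain E)
  (brF wdF : nat -> nat -> cochain F -> cochain F -> cochain F)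
  (Phi : nat -> cochain E -> cochain F) : Prop :=
  [/\ (forall k c, inC ipE k c -> inC ipF k (Phi k c)),
      (forall k c c' (r : R), inC ipE k c -> inC ipE k c' ->
         Phi k (addC (scaleC r c) c') = addC (scaleC r (Phi k c)) (Phi k c')),
      (forall r s c d, inC ipE r c -> inC ipE s d ->
         Phi (r + s)%N (wdE r s c d) = wdF r s (Phi r c) (Phi s d)) &
      (forall r s c d, inC ipE r c -> inC ipE s d ->
         Phi (r + s - 2)%N (brE r s c d) = brF r s (Phi r c) (Phi s d))].

End Morphisms.

From Pilot Require Import Defs.
From mathcomp Require Import all_boot all_algebra.
From Stdlib Require Import FunctionalExtensionality.
Set Implicit Arguments. Unset Strict Implicit. Unset Printing Implicit Defensive.
Import GRing.Theory.
Local Open Scope ring_scope.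

(* Expanding [[[[m, m], x], y], z] with the Leibniz rule of the bracket gives
   [m, m](x, y, z) = 2 (m(m(x,y),z) + m(y,m(x,z)) - m(x,m(y,z))), so, 2 being
   invertible, m in C^3 is a Courant algebroid structure iff [m, m] = 0; this
   is preserved by Phi since [Phi m, Phi m] = Phi [m, m].  Every datum of a
   Courant algebroid is a bracket or a product in C^*: m(x, y) = [[m, x], y],
   the anchor is a |-> [[m, x], a], <x, y> = [x, y], and the module structure
   is a /\ x; hence Phi_0, Phi_1 preserve them.  Finally Phi commutes with
   delta_m = [m, .], so it maps cocycles and coboundaries along. *)

Section Cochains.
Variables (R : comNzRingType) (A : comAlgType R) (E : lmodType A) (ip : E -> E -> A).

Lemma sgn_odd n : sgn R n = (-1) ^+ odd n.
Proof. by rewrite /sgn signr_odd. Qed.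

Lemma scE1r (v : E) : scE 1 v = v.
Proof. by rewrite /scE !scale1r. Qed.

Lemma scEN1r (v : E) : scE (-1) v = - v.
Proof. by rewrite /scE !scaleN1r. Qed.

Lemma inC0_mk0 c : inC ip 0 c -> c = mk0 E (c0 c).
Proof.
case: c => a x f [/= -> f0]; congr Cochain.
by apply: functional_extensionality => s; rewrite f0.
Qed.

Lemma inC1_mk1 c : inC ip 1 c -> c = mk1 (c1 c).
Proof.
case: c => a x f [/= -> f0]; congr Cochain.
by apply: functional_extensionality => s; rewrite f0.
Qed.

Lemma inC4_eq0 M : inC ip 4 M -> (forall x y z, cf M [:: x; y; z] = 0) -> M = zeroC.
Proof.
case: M => a x f [/= -> -> f_arity _ _] f0; congr Cochain.
apply: functional_extensionality => s.
by case: s f_arity => [|x1 [|x2 [|x3 [|x4 s]]]] f_arity; rewrite ?f0 ?f_arity.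
Qed.

Lemma addC_idem_eq0 (u : cochain E) : Defs.addC u u = u -> u = zeroC.
Proof.
have idem_eq0 (V : zmodType) (v : V) : v + v = v -> v = 0.
  by move=> vv; apply: (@addrI _ v); rewrite addr0.
case: u => a x f [/idem_eq0 -> /idem_eq0 -> ff]; congr Cochain.
by apply: functional_extensionality => s; apply: idem_eq0; exact: (congr1 (fun g => g s) ff).
Qed.

Lemma scaleC1 (u : cochain E) : scaleC 1 u = u.
Proof.
case: u => a x f; rewrite /scaleC /= scale1r scE1r; congr Cochain.
by apply: functional_extensionality => s; rewrite scE1r.
Qed.

Lemma isSymbol_ins C sigma x : isSymbol ip 3 C sigma ->
  isSymbol ip 2 (fun s => C (x :: s)) (fun s => sigma (x :: s)).
Proof.
case=> sigma_der _ sigma_ip _; split.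
- by move=> s s0; apply: sigma_der; rewrite /= s0.
- by move=> a s1 s2 y z r /eqP.
- by move=> s u w s0; rewrite (sigma_ip (x :: s)) //= s0.
- by move=> s1 s2 y z u; rewrite addn2 => /eqP.
Qed.

Lemma good_inner_product_0 : good_inner_product ip -> forall w, ip 0 w = 0 /\ ip w 0 = 0.
Proof.
case=> ip_linear ip_sym _ _ _ w.
have ip0w : ip 0 w = 0.
  by apply: (@addIr _ (ip 0 w)); rewrite add0r -{1}(mul1r (ip 0 w)) -ip_linear scaler0 addr0.
by split; rewrite // ip_sym.
Qed.

Lemma inC_zeroC : good_inner_product ip -> forall k, inC ip k zeroC.
Proof.
move=> ipP [|[|k]] //=; split=> //; have ip0 w := good_inner_product_0 ipP w.
- by move=> s1 s2 x y r _; rewrite /scE scaler0 addr0.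
exists (fun _ _ => 0); split.
- by move=> s _; split=> [r a b|a b]; rewrite ?scaler0 ?mulr0 ?mul0r ?addr0.
- by move=> a s1 s2 x y r _; rewrite scaler0 addr0.
- by move=> s u w _; rewrite (ip0 w).1 (ip0 u).2 addr0.
- by move=> s1 s2 x y u _; rewrite addr0 (ip0 u).1.
Qed.

Lemma double_eq0 (two_inv : exists y : R, 2%:R * y = 1) (v : E) : v + v = 0 -> v = 0.
Proof.
move=> vv; have [y two_y] := two_inv.
have -> : v = (y%:A + y%:A) *: v by rewrite -scalerDl -mulr2n -mulr_natl two_y !scale1r.
by rewrite scalerDl -scalerDr vv scaler0.
Qed.

Definition jacobiator (m : cochain E) (x y z : E) : E :=
  cf m [:: cf m [:: x; y]; z] + cf m [:: y; cf m [:: x; z]] - cf m [:: x; cf m [:: y; z]].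

Variable br : nat -> nat -> cochain E -> cochain E -> cochain E.
Hypothesis brP : isBracket ip br.

Lemma inC_bracket r s k c d :
  k = (r + s - 2)%N -> inC ip r c -> inC ip s d -> inC ip k (br r s c d).
Proof. by case: brP => [[br_in _ _] _] ->; apply: br_in. Qed.

Lemma bracket_ins r C x : (2 <= r)%N -> inC ip r C -> br r 1 C (mk1 x) = ins r x C.
Proof. by case: brP => _ [_ _ _ br_ins _] r2 CP; rewrite (br_ins r C x r2 CP).1. Qed.

Lemma bracket_ins_left r C x : (2 <= r)%N -> inC ip r C ->
  br 1 r (mk1 x) C = scaleC (sgn R r.+1) (ins r x C).
Proof. by case: brP => _ [_ _ _ br_ins _] r2 CP; rewrite (br_ins r C x r2 CP).2. Qed.

Lemma bracket2_ins C x : inC ip 2 C -> br 2 1 C (mk1 x) = mk1 (cf C [:: x]).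
Proof. by move=> CP; rewrite bracket_ins. Qed.

Lemma cf_bracket_ins r C x s : (2 < r)%N -> inC ip r C ->
  cf (br r 1 C (mk1 x)) s = cf C (x :: s).
Proof. by move=> r3 CP; rewrite bracket_ins ?(ltnW r3) // /ins gtn_eqF. Qed.

Lemma bracket_Leibniz r s rs r1 s1 C1 C2 x :
  rs = (r + s - 2)%N -> r1 = (r + 1 - 2)%N -> s1 = (s + 1 - 2)%N ->
  inC ip r C1 -> inC ip s C2 ->
  br rs 1 (br r s C1 C2) (mk1 x) =
  Defs.addC (scaleC (sgn R s) (br r1 s (br r 1 C1 (mk1 x)) C2))
            (br r s1 C1 (br s 1 C2 (mk1 x))).
Proof. by case: brP => _ [_ _ _ _ br_Leibniz] -> -> ->; apply: br_Leibniz. Qed.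

Lemma cf_bracket22 D1 D2 z : inC ip 2 D1 -> inC ip 2 D2 ->
  cf (br 2 2 D1 D2) [:: z] = - cf D2 [:: cf D1 [:: z]] + cf D1 [:: cf D2 [:: z]].
Proof.
move=> D1P D2P.
have -> : cf (br 2 2 D1 D2) [:: z] = c1 (br 2 1 (br 2 2 D1 D2) (mk1 z)).
  by rewrite bracket2_ins //; apply: inC_bracket.
rewrite (@bracket_Leibniz 2 2 2 1 1) //= !bracket2_ins // bracket_ins_left //=.
by rewrite !sgn_odd /= expr0 expr1 scE1r scEN1r.
Qed.

Lemma cf_bracket33 m x y z : inC ip 3 m ->
  cf (br 3 3 m m) [:: x; y; z] = jacobiator m x y z + jacobiator m x y z.
Proof.
move=> mP.
have ins_m w : inC ip 2 (br 3 1 m (mk1 w)) by apply: inC_bracket.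
have cf_ins_m w s : cf (br 3 1 m (mk1 w)) s = cf m (w :: s) by apply: cf_bracket_ins.
rewrite -(@cf_bracket_ins 4 _ x) //; last exact: inC_bracket.
rewrite (@bracket_Leibniz 3 3 4 2 2) //=.
rewrite -(@cf_bracket_ins 3 _ y) //; last exact: inC_bracket.
rewrite -(@cf_bracket_ins 3 (br 3 2 _ _) y) //; last exact: inC_bracket.
rewrite (@bracket_Leibniz 2 3 3 1 2 _ _ y erefl erefl erefl (ins_m x) mP) /=.
rewrite (@bracket_Leibniz 3 2 3 2 1 _ _ y erefl erefl erefl mP (ins_m x)) /=.
rewrite (bracket2_ins _ (ins_m x)) (@bracket_ins_left 3) //=.
rewrite (cf_bracket22 _ (ins_m x) (ins_m y)) (cf_bracket22 _ (ins_m y) (ins_m x)) !cf_ins_m.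
rewrite !sgn_odd /= expr0 expr1 !scE1r !scEN1r /jacobiator.
set a := cf m [:: cf m [:: x; y]; z]; set b := cf m [:: y; cf m [:: x; z]].
set c := cf m [:: x; cf m [:: y; z]].
by rewrite !opprD !opprK [- c + b]addrC [b - c + a]addrC !addrA.
Qed.

Lemma isCourantP (two_inv : exists y : R, 2%:R * y = 1) m :
  inC ip 3 m -> isCourant ip m <-> br 3 3 m m = zeroC.
Proof.
move=> mP; split=> [[_ m_Jacobi] | mm0].
  apply: inC4_eq0 => [|x y z]; first exact: inC_bracket.
  by rewrite cf_bracket33 // /jacobiator (m_Jacobi x y z) subrr addr0.
split=> // x y z; apply/eqP; rewrite eq_sym -subr_eq0; apply/eqP.
by apply: double_eq0 => //; rewrite -cf_bracket33 // mm0.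
Qed.

End Cochains.

Section GradedPoissonMorphism.
Variables (R : comNzRingType) (A B : comAlgType R) (E : lmodType A) (F : lmodType B).
Variables (ipE : E -> E -> A) (ipF : F -> F -> B).
Variables (brE wdE : nat -> nat -> cochain E -> cochain E -> cochain E).
Variables (brF wdF : nat -> nat -> cochain F -> cochain F -> cochain F).
Variable Phi : nat -> cochain E -> cochain F.
Hypothesis ipEP : good_inner_product ipE.
Hypotheses (brEP : isBracket ipE brE) (wdEP : isWedge ipE brE wdE).
Hypotheses (brFP : isBracket ipF brF) (wdFP : isWedge ipF brF wdF).
Hypothesis PhiP : isGPMorphism ipE ipF brE wdE brF wdF Phi.

Let Phi0 (a : A) : B := c0 (Phi 0 (mk0 E a)).
Let Phi1 (x : E) : F := c1 (Phi 1 (mk1 x)).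

Lemma inC_Phi k c : inC ipE k c -> inC ipF k (Phi k c).
Proof. by case: PhiP => Phi_in _ _ _; apply: Phi_in. Qed.

Lemma Phi_linear k c c' (r : R) : inC ipE k c -> inC ipE k c' ->
  Phi k (Defs.addC (scaleC r c) c') = Defs.addC (scaleC r (Phi k c)) (Phi k c').
Proof. by case: PhiP => _ Phi_lin _ _; apply: Phi_lin. Qed.

Lemma Phi_wedge r s k c d : k = (r + s)%N -> inC ipE r c -> inC ipE s d ->
  Phi k (wdE r s c d) = wdF r s (Phi r c) (Phi s d).
Proof. by case: PhiP => _ _ Phi_wd _ ->; apply: Phi_wd. Qed.

Lemma Phi_bracket r s k c d : k = (r + s - 2)%N -> inC ipE r c -> inC ipE s d ->
  Phi k (brE r s c d) = brF r s (Phi r c) (Phi s d).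
Proof. by case: PhiP => _ _ _ Phi_br ->; apply: Phi_br. Qed.

Lemma Phi_zeroC k : Phi k zeroC = zeroC.
Proof.
have zeroD : Defs.addC (@zeroC _ _ E) zeroC = zeroC by rewrite /Defs.addC /zeroC /= !addr0.
have := Phi_linear 1 (inC_zeroC ipEP k) (inC_zeroC ipEP k).
by rewrite !scaleC1 zeroD => PhiD; apply: addC_idem_eq0; rewrite -PhiD.
Qed.

Lemma Phi_mk0 a : Phi 0 (mk0 E a) = mk0 F (Phi0 a).
Proof. by apply: inC0_mk0; apply: inC_Phi. Qed.

Lemma Phi_mk1 x : Phi 1 (mk1 x) = mk1 (Phi1 x).
Proof. by apply: inC1_mk1; apply: inC_Phi. Qed.

Lemma Phi_bracket_ins m x : inC ipE 3 m ->
  Phi 2 (brE 3 1 m (mk1 x)) = brF 3 1 (Phi 3 m) (mk1 (Phi1 x)).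
Proof. by move=> mP; rewrite (@Phi_bracket 3 1) // Phi_mk1. Qed.

Lemma Phi_isCourant (two_inv : exists y : R, 2%:R * y = 1) m :
  isCourant ipE m -> isCourant ipF (Phi 3 m).
Proof.
move=> mC; have mP := mC.1.
apply/(isCourantP brFP two_inv (inC_Phi mP)).
have mm0 : brE 3 3 m m = zeroC := (isCourantP brEP two_inv mP).1 mC.
by rewrite -(@Phi_bracket 3 3 4) // mm0 Phi_zeroC.
Qed.

Lemma Phi0_linear (r : R) a b : Phi0 (r *: a + b) = r *: Phi0 a + Phi0 b.
Proof.
rewrite /Phi0; have -> : mk0 E (r *: a + b) = Defs.addC (scaleC r (mk0 E a)) (mk0 E b).
  by rewrite /mk0 /Defs.addC /scaleC /= /scE !scaler0 !addr0.
by rewrite Phi_linear.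
Qed.

Lemma Phi1_linear (r : R) x y : Phi1 (scE r x + y) = scE r (Phi1 x) + Phi1 y.
Proof.
rewrite /Phi1; have -> : mk1 (scE r x + y) = Defs.addC (scaleC r (mk1 x)) (mk1 y).
  by rewrite /mk1 /Defs.addC /scaleC /= /scE !scaler0 !addr0.
by rewrite Phi_linear.
Qed.

Lemma Phi0M a b : Phi0 (a * b) = Phi0 a * Phi0 b.
Proof.
case: wdEP => _ _ wdE0 _; case: wdFP => _ _ wdF0 _.
have [wdE00 _ _] := wdE0 a b 0; have [wdF00 _ _] := wdF0 (Phi0 a) (Phi0 b) 0.
by rewrite {1}/Phi0 -wdE00 (@Phi_wedge 0 0) // !Phi_mk0 wdF00.
Qed.

Lemma Phi1Z a x : Phi1 (a *: x) = Phi0 a *: Phi1 x.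
Proof.
case: wdEP => _ _ wdE0 _; case: wdFP => _ _ wdF0 _.
have [_ wdE01 _] := wdE0 a a x; have [_ wdF01 _] := wdF0 (Phi0 a) (Phi0 a) (Phi1 x).
by rewrite {1}/Phi1 -wdE01 (@Phi_wedge 0 1) // Phi_mk0 Phi_mk1 wdF01.
Qed.

Lemma Phi0_ip x y : Phi0 (ipE x y) = ipF (Phi1 x) (Phi1 y).
Proof.
case: brEP => _ [_ brE11 _ _ _]; case: brFP => _ [_ brF11 _ _ _].
by rewrite /Phi0 -brE11 (@Phi_bracket 1 1) // !Phi_mk1 brF11.
Qed.

Lemma Phi1_bracket m x y : inC ipE 3 m ->
  Phi1 (cf m [:: x; y]) = cf (Phi 3 m) [:: Phi1 x; Phi1 y].
Proof.
move=> mP; have m'P := inC_Phi mP.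
have insE : inC ipE 2 (brE 3 1 m (mk1 x)) by apply: inC_bracket.
have insF : inC ipF 2 (brF 3 1 (Phi 3 m) (mk1 (Phi1 x))) by apply: inC_bracket.
have -> : Phi1 (cf m [:: x; y]) = c1 (Phi 1 (brE 2 1 (brE 3 1 m (mk1 x)) (mk1 y))).
  by rewrite (bracket2_ins brEP) // (bracket_ins brEP).
rewrite (@Phi_bracket 2 1) // Phi_bracket_ins // Phi_mk1.
by rewrite (bracket2_ins brFP) // (bracket_ins brFP).
Qed.

(* The anchor of m at x is the symbol of [m, x] in C^2, which [[m, x], a] computes. *)
Lemma Phi0_anchor m sigma sigma' x a : inC ipE 3 m ->
  isSymbol ipE 3 (cf m) sigma -> isSymbol ipF 3 (cf (Phi 3 m)) sigma' ->
  Phi0 (sigma [:: x] a) = sigma' [:: Phi1 x] (Phi0 a).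
Proof.
move=> mP sigmaP sigma'P; have m'P := inC_Phi mP.
case: brEP => _ [_ _ brE20 _ _]; case: brFP => _ [_ _ brF20 _ _].
have insE : inC ipE 2 (brE 3 1 m (mk1 x)) by apply: inC_bracket.
have insF : inC ipF 2 (brF 3 1 (Phi 3 m) (mk1 (Phi1 x))) by apply: inC_bracket.
have symE : isSymbol ipE 2 (cf (brE 3 1 m (mk1 x))) (fun s => sigma (x :: s)).
  by rewrite (bracket_ins brEP) //; apply: isSymbol_ins.
have symF : isSymbol ipF 2 (cf (brF 3 1 (Phi 3 m) (mk1 (Phi1 x))))
                           (fun s => sigma' (Phi1 x :: s)).
  by rewrite (bracket_ins brFP) //; apply: isSymbol_ins.
rewrite /Phi0 -(brE20 _ _ a insE symE).1 (@Phi_bracket 2 0) // Phi_bracket_ins // Phi_mk0.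
by rewrite (brF20 _ _ (Phi0 a) insF symF).1.
Qed.

Lemma Phi_isCourantMorphism m : inC ipE 3 m ->
  isCourantMorphism ipE ipF m (Phi 3 m) Phi0 Phi1.
Proof.
move=> mP; split; split.
- exact: Phi0_linear.
- exact: Phi1_linear.
- exact: Phi0M.
- exact: Phi1Z.
- by move=> x y; apply: Phi1_bracket.
- move=> sigma sigma' sigmaP sigma'P x a; exact (Phi0_anchor x a mP sigmaP sigma'P).
- exact Phi0_ip.
Qed.

End GradedPoissonMorphism.

Theorem mainTheorem12 (R : comNzRingType) (A B : comAlgType R)
  (E : lmodType A) (F : lmodType B)
  (ipE : E -> E -> A) (ipF : F -> F -> B)
  (brE wdE : nat -> nat -> cochain E -> cochain E -> cochain E)
  (brF wdF : nat -> nat -> cochain F -> cochain F -> cochain F)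
  (m : cochain E) (Phi : nat -> cochain E -> cochain F) :
  (forall n : nat, exists y : R, n.+1%:R * y = 1) ->
  fg_projective E -> fg_projective F ->
  good_inner_product ipE -> good_inner_product ipF ->
  isBracket ipE brE -> isWedge ipE brE wdE ->
  isBracket ipF brF -> isWedge ipF brF wdF ->
  isCourant ipE m ->
  isGPMorphism ipE ipF brE wdE brF wdF Phi ->
  let m' := Phi 3%N m in
  [/\ isCourant ipF m',
      isCourantMorphism ipE ipF m m' (fun a => c0 (Phi 0%N (mk0 E a)))
                                     (fun x => c1 (Phi 1%N (mk1 x))),
      (forall k c, inC ipE k c -> brE 3%N k m c = zeroC ->
                   brF 3%N k m' (Phi k c) = zeroC) &
      (forall k b, inC ipE k b ->
         exists b', inC ipF k b' /\ Phi k.+1 (brE 3%N k m b) = brF 3%N k m' b')].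
Proof.
move=> inv_nat _ _ ipEP _ brEP wdEP brFP wdFP mC PhiP m'.
have mP := mC.1.
have Phi_delta k c : inC ipE k c -> Phi k.+1 (brE 3 k m c) = brF 3 k m' (Phi k c).
  by move=> cP; apply: (Phi_bracket PhiP erefl mP cP).
split.
- exact: (Phi_isCourant ipEP brEP brFP PhiP (inv_nat 1%N)).
- exact: (Phi_isCourantMorphism brEP wdEP brFP wdFP PhiP).
- by move=> k c cP mc0; rewrite -Phi_delta // mc0 (Phi_zeroC ipEP PhiP).
- by move=> k b bP; exists (Phi k b); split; [exact: (inC_Phi PhiP bP) | exact: Phi_delta].
Qed.
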